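(* Let $\sigma:\mathbb{R}\to\mathbb{R}$ be an increasing odd homeomorphism. Then every point of $\mathbb{R}^2$ that does not belong to a $\sigma$-rational line has a dense orbit in $\mathbb{R}^2$ under the action of the group $\Gamma(\sigma)$.
   Context: For an increasing odd homeomorphism $\sigma:\mathbb{R}\to\mathbb{R}$, define the bijections $h_\sigma,v_\sigma:\mathbb{R}^2\to\mathbb{R}^2$ by $h_\sigma(x,y)=(x+\sigma^{-1}(y),y)$ and $v_\sigma(x,y)=(x,\sigma(x)+y)$, and let $\Gamma(\sigma)$ be the group (under composition) generated by $h_\sigma$ and $v_\sigma$. Let $\mathcal M(h_\sigma,v_\sigma)$ denote the monoid (containing the identity) generated by $h_\sigma,v_\sigma$, and $\mathcal M(h_\sigma^{-1},v_\sigma^{-1})$ the monoid generated by $h_\sigma^{-1},v_\sigma^{-1}$. Let $Ox=\mathbb{R}\times\{0\}$ and $Oy=\{0\}\times\mathbb{R}$. The $\sigma$-rational lines are the subsets of $\mathbb{R}^2$ of the form: $Ox$ or $Oy$; $m(Ox)$ with $m\in\mathcal M(h_\sigma,v_\sigma)$; or $m(Oy)$ with $m\in\mathcal M(h_\sigma^{-1},v_\sigma^{-1})$. *)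

From Stdlib Require Import Reals List.
Open Scope R_scope.

Definition incr_odd_homeo (sigma : R -> R) : Prop :=
  (forall x y, x < y -> sigma x < sigma y) /\
  (forall x, sigma (- x) = - sigma x) /\
  continuity sigma /\
  (forall y, exists x, sigma x = y).

Definition pt := (R * R)%type.

Definition hmap (sinv : R -> R) (p : pt) : pt := (fst p + sinv (snd p), snd p).
Definition vmap (sigma : R -> R) (p : pt) : pt := (fst p, sigma (fst p) + snd p).
Definition hinv (sinv : R -> R) (p : pt) : pt := (fst p - sinv (snd p), snd p).
Definition vinv (sigma : R -> R) (p : pt) : pt := (fst p, snd p - sigma (fst p)).

Inductive gen := Gh | Gv | Ghi | Gvi.

Definition act_gen (sigma sinv : R -> R) (g : gen) : pt -> pt :=
  match g with
  | Gh => hmap sinv | Gv => vmap sigma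
  | Ghi => hinv sinv | Gvi => vinv sigma
  end.

(* a word w = [g1; ...; gk] acts as g1 o ... o gk ; the empty word is the identity *)
Definition act_word (sigma sinv : R -> R) (w : list gen) (p : pt) : pt :=
  fold_right (fun g q => act_gen sigma sinv g q) p w.

Definition in_Gamma (sigma sinv : R -> R) (f : pt -> pt) : Prop :=
  exists w, forall p, f p = act_word sigma sinv w p.

Definition in_M_pos (sigma sinv : R -> R) (f : pt -> pt) : Prop :=
  exists w, Forall (fun g => g = Gh \/ g = Gv) w /\
            forall p, f p = act_word sigma sinv w p.
Definition in_M_neg (sigma sinv : R -> R) (f : pt -> pt) : Prop :=
  exists w, Forall (fun g => g = Ghi \/ g = Gvi) w /\
            forall p, f p = act_word sigma sinv w p.

Definition Ox (p : pt) : Prop := snd p = 0.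
Definition Oy (p : pt) : Prop := fst p = 0.

Definition on_rational_line (sigma sinv : R -> R) (p : pt) : Prop :=
  Ox p \/ Oy p \/
  (exists m, in_M_pos sigma sinv m /\ exists q, Ox q /\ m q = p) \/
  (exists m, in_M_neg sigma sinv m /\ exists q, Oy q /\ m q = p).

Definition dist2 (p q : pt) : R :=
  sqrt ((fst p - fst q)^2 + (snd p - snd q)^2).

Definition dense_orbit (sigma sinv : R -> R) (p : pt) : Prop :=
  forall (q : pt) (eps : R), 0 < eps ->
    exists g, in_Gamma sigma sinv g /\ dist2 (g p) q < eps.

From Stdlib Require Import Reals List Lra Lia Classical.
Open Scope R_scope.

(* In the open quadrant, the descent applying h^-1 when y < sigma x and v^-1
   otherwise is a Euclidean algorithm.  It only uses inverse generators and the
   graph of sigma is v(Ox), so it reaches that graph exactly when the starting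
   point lies on a sigma-rational line.  From a non-rational point it therefore
   runs forever, both kinds of steps recur, and the height becomes arbitrarily
   small.  Powers of h move a point of small nonzero height b horizontally in
   steps sigma^-1(b), so the orbit closure of p contains Ox and, being closed and
   invariant, the whole orbit of Ox.  That orbit is dense: if the segment from T
   to T + (e, 0) missed it, T's descent word would keep T + (e, 0) to the right
   of and below the descent of T, and above the graph whenever the descent of T
   is (by the intermediate value theorem), so its height would drop by sigma(e)
   at each of the infinitely many vertical steps.  The point reflection commutes
   with the generators and the mirror (x, y) -> (-x, y) conjugates each to its
   inverse; they carry everything to the other quadrants. *)

Definition frequently (B : nat -> Prop) : Prop :=
  forall j, exists k, (j <= k)%nat /\ B k.

Lemma frequently_of_steady_decrease (z w : nat -> R) (B : nat -> Prop) :
  (forall k, 0 < z k) -> (forall k, 0 < w k) ->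
  (forall k, ~ B k -> z (S k) <= z k - w k /\ w (S k) = w k) ->
  frequently B.
Proof.
  intros z_pos w_pos step j. apply NNPP; intro never.
  assert (run : forall n, z (j + n)%nat <= z j - INR n * w j /\ w (j + n)%nat = w j).
  { induction n as [|n [IHz IHw]].
    - rewrite Nat.add_0_r; simpl; split; [lra | reflexivity].
    - assert (notB : ~ B (j + n)%nat).
      { intro HB; apply never; exists (j + n)%nat; split; [lia | exact HB]. }
      destruct (step _ notB) as [Hz Hw].
      rewrite Nat.add_succ_r, S_INR. rewrite IHw in Hz. split; [lra | congruence]. }
  destruct (INR_archimed (w j) (z j) (w_pos j)) as [n Hn].
  destruct (run n) as [Hz _]. specialize (z_pos (j + n)%nat). lra.
Qed.

Lemma not_frequently_large_decrease (a : nat -> R) (B : nat -> Prop) (c : R) :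
  0 < c -> (forall k, 0 < a k) -> (forall k, a (S k) <= a k) ->
  (forall k, B k -> a (S k) <= a k - c) -> ~ frequently B.
Proof.
  intros c_pos a_pos a_decr a_drop freq.
  assert (a_mono : forall k n, a (k + n)%nat <= a k).
  { intros k n; induction n; [rewrite Nat.add_0_r; lra|].
    rewrite Nat.add_succ_r. specialize (a_decr (k + n)%nat). lra. }
  assert (drops : forall N, exists j, a j <= a 0%nat - INR N * c).
  { induction N as [|N [j Hj]].
    - exists 0%nat; simpl; lra.
    - destruct (freq j) as [k [Hjk Bk]]. exists (S k). rewrite S_INR.
      specialize (a_drop k Bk). pose proof (a_mono j (k - j)%nat) as a_jk.
      replace (j + (k - j))%nat with k in a_jk by lia. lra. }
  destruct (INR_archimed c (a 0%nat) c_pos) as [N HN].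
  destruct (drops N) as [j Hj]. specialize (a_pos j). lra.
Qed.

Lemma nat_floor_exists t : 0 <= t -> exists n : nat, INR n <= t < INR n + 1.
Proof.
  intros t_ge0. destruct (INR_archimed 1 t) as [N HN]; [lra|]. rewrite Rmult_1_r in HN.
  induction N as [|N IHN]; [simpl in HN; lra|].
  destruct (Rle_lt_dec (INR N) t) as [le|lt].
  - exists N. rewrite S_INR in HN. lra.
  - apply IHN; lra.
Qed.

Lemma increasing_surjective_continuity (f : R -> R) :
  (forall x y, x < y -> f x < f y) -> (forall y, exists x, f x = y) -> continuity f.
Proof.
  intros f_incr f_surj x eps eps_pos.
  destruct (f_surj (f x - eps)) as [u fu]. destruct (f_surj (f x + eps)) as [v fv].
  assert (ux : u < x).
  { apply Rnot_le_lt; intros [xu | <-]; [apply f_incr in xu|]; lra. }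
  assert (xv : x < v).
  { apply Rnot_le_lt; intros [vx | ->]; [apply f_incr in vx|]; lra. }
  exists (Rmin (x - u) (v - x)); split; [apply Rmin_pos; lra|].
  intros y [_ dy]; simpl in *; unfold R_dist in *.
  apply Rabs_def2 in dy. pose proof (Rmin_l (x - u) (v - x)). pose proof (Rmin_r (x - u) (v - x)).
  assert (fuy : f u < f y) by (apply f_incr; lra).
  assert (fyv : f y < f v) by (apply f_incr; lra).
  apply Rabs_def1; lra.
Qed.

Lemma continuity_eps_delta (f : R -> R) : continuity f ->
  forall x eps, 0 < eps -> exists d, 0 < d /\ forall y, Rabs (y - x) < d -> Rabs (f y - f x) < eps.
Proof.
  intros f_cont x eps eps_pos. destruct (f_cont x eps eps_pos) as [d [d_pos Hd]].
  exists d; split; [exact d_pos|]. intros y dy.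
  destruct (Req_dec y x) as [-> | neq].
  - rewrite Rminus_diag, Rabs_R0; exact eps_pos.
  - apply (Hd y). split; [split; [exact I | congruence] | exact dy].
Qed.

Definition close (e : R) (P Q : pt) : Prop :=
  Rabs (fst P - fst Q) < e /\ Rabs (snd P - snd Q) < e.

Lemma close_refl e P : 0 < e -> close e P P.
Proof. intros; unfold close; rewrite !Rminus_diag, Rabs_R0; lra. Qed.

Lemma close_trans e1 e2 P Q T : close e1 P Q -> close e2 Q T -> close (e1 + e2) P T.
Proof.
  intros [PQ1 PQ2] [QT1 QT2]; split.
  - pose proof (Rabs_triang (fst P - fst Q) (fst Q - fst T)).
    replace (fst P - fst T) with ((fst P - fst Q) + (fst Q - fst T)) by ring; lra.
  - pose proof (Rabs_triang (snd P - snd Q) (snd Q - snd T)).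
    replace (snd P - snd T) with ((snd P - snd Q) + (snd Q - snd T)) by ring; lra.
Qed.

Lemma dist2_lt_of_close e P Q : close e P Q -> dist2 P Q < 2 * e.
Proof.
  intros [C1 C2]. unfold dist2.
  set (a := fst P - fst Q) in *. set (b := snd P - snd Q) in *.
  pose proof (Rabs_pos a). pose proof (Rabs_pos b).
  rewrite <- (sqrt_pow2 (2 * e)) by lra. apply sqrt_lt_1_alt. split.
  - pose proof (pow2_ge_0 a). pose proof (pow2_ge_0 b). lra.
  - rewrite <- (pow2_abs a), <- (pow2_abs b). nra.
Qed.

Definition box_continuous (F : pt -> pt) : Prop :=
  forall Q e, 0 < e -> exists d, 0 < d /\ forall P, close d P Q -> close e (F P) (F Q).

Lemma box_continuous_comp F G :
  box_continuous F -> box_continuous G -> box_continuous (fun P => G (F P)).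
Proof.
  intros F_cont G_cont Q e e_pos.
  destruct (G_cont (F Q) e e_pos) as [d1 [d1_pos H1]].
  destruct (F_cont Q d1 d1_pos) as [d2 [d2_pos H2]].
  exists d2; split; auto.
Qed.

Lemma shear_close (f : R -> R) : continuity f ->
  forall a b e, 0 < e -> exists d, 0 < d /\ forall a' b',
    Rabs (a' - a) < d -> Rabs (b' - b) < d ->
    Rabs ((a' + f b') - (a + f b)) < e /\ Rabs (b' - b) < e.
Proof.
  intros f_cont a b e e_pos.
  destruct (continuity_eps_delta f f_cont b (e / 2)) as [d [d_pos Hd]]; [lra|].
  exists (Rmin (e / 2) d); split; [apply Rmin_pos; lra|].
  intros a' b' da db. pose proof (Rmin_l (e / 2) d). pose proof (Rmin_r (e / 2) d).
  specialize (Hd b' ltac:(lra)).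
  pose proof (Rabs_triang (a' - a) (f b' - f b)).
  replace (a' + f b' - (a + f b)) with ((a' - a) + (f b' - f b)) by ring. split; lra.
Qed.

Lemma segment_continuity (F : pt -> pt) (T : pt) (e : R) :
  box_continuous F -> continuity (fun t => snd (F (fst T + t * e, snd T))).
Proof.
  intros F_cont t eps eps_pos.
  destruct (F_cont (fst T + t * e, snd T) eps eps_pos) as [d [d_pos Hd]].
  exists (d / (Rabs e + 1)); split.
  { apply Rdiv_lt_0_compat; [lra | pose proof (Rabs_pos e); lra]. }
  intros s [_ ds]; simpl in *; unfold R_dist in *.
  apply Hd. split; simpl; [| rewrite Rminus_diag, Rabs_R0; exact d_pos].
  replace (fst T + s * e - (fst T + t * e)) with ((s - t) * e) by ring.
  rewrite Rabs_mult. pose proof (Rabs_pos e). pose proof (Rabs_pos (s - t)).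
  assert (Rabs (s - t) * (Rabs e + 1) < d).
  { apply Rmult_lt_compat_r with (r := Rabs e + 1) in ds; [|lra].
    unfold Rdiv in ds. rewrite Rmult_assoc, Rinv_l, Rmult_1_r in ds by lra. exact ds. }
  nra.
Qed.

Definition inv_gen (g : gen) : gen :=
  match g with Gh => Ghi | Gv => Gvi | Ghi => Gh | Gvi => Gv end.

Definition inv_word (w : list gen) : list gen := rev (map inv_gen w).

Definition positive_gen (g : gen) : Prop := g = Gh \/ g = Gv.
Definition negative_gen (g : gen) : Prop := g = Ghi \/ g = Gvi.

Lemma inv_word_positive w : Forall negative_gen w -> Forall positive_gen (inv_word w).
Proof.
  intros neg. apply Forall_rev, Forall_map.
  eapply Forall_impl; [| exact neg]. intros g [-> | ->]; [left | right]; reflexivity.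
Qed.

Lemma map_inv_gen_negative w : Forall positive_gen w -> Forall negative_gen (map inv_gen w).
Proof.
  intros pos. apply Forall_map.
  eapply Forall_impl; [| exact pos]. intros g [-> | ->]; [left | right]; reflexivity.
Qed.

Definition opp_pt (P : pt) : pt := (- fst P, - snd P).
Definition mirror (P : pt) : pt := (- fst P, snd P).

Lemma opp_pt_involutive P : opp_pt (opp_pt P) = P.
Proof. destruct P; unfold opp_pt; simpl; rewrite !Ropp_involutive; reflexivity. Qed.

Lemma mirror_involutive P : mirror (mirror P) = P.
Proof. destruct P; unfold mirror; simpl; rewrite Ropp_involutive; reflexivity. Qed.

Lemma close_opp_pt e P Q : close e P Q -> close e (opp_pt P) (opp_pt Q).
Proof.
  intros [C1 C2]; unfold close, opp_pt; simpl.
  replace (- fst P - - fst Q) with (- (fst P - fst Q)) by ring.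
  replace (- snd P - - snd Q) with (- (snd P - snd Q)) by ring.
  rewrite !Rabs_Ropp; split; assumption.
Qed.

Lemma close_mirror e P Q : close e P Q -> close e (mirror P) (mirror Q).
Proof.
  intros [C1 C2]; unfold close, mirror; simpl.
  replace (- fst P - - fst Q) with (- (fst P - fst Q)) by ring.
  rewrite Rabs_Ropp; split; assumption.
Qed.

Section ShearGroup.

Variables sigma sinv : R -> R.
Hypothesis sigma_increasing : forall x y, x < y -> sigma x < sigma y.
Hypothesis sigma_odd : forall x, sigma (- x) = - sigma x.
Hypothesis sinv_sigma : forall x, sinv (sigma x) = x.
Hypothesis sigma_sinv : forall y, sigma (sinv y) = y.

Local Notation gact := (act_gen sigma sinv).
Local Notation word := (act_word sigma sinv).

Lemma sigma_le x y : x <= y -> sigma x <= sigma y.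
Proof. intros [lt | ->]; [left; auto | right; reflexivity]. Qed.

Lemma sinv_increasing x y : x < y -> sinv x < sinv y.
Proof.
  intros xy. apply Rnot_le_lt; intro yx. apply sigma_le in yx.
  rewrite !sigma_sinv in yx. lra.
Qed.

Lemma sinv_le x y : x <= y -> sinv x <= sinv y.
Proof. intros [lt | ->]; [left; apply sinv_increasing; auto | right; reflexivity]. Qed.

Lemma sigma_0 : sigma 0 = 0.
Proof. pose proof (sigma_odd 0) as odd0. rewrite Ropp_0 in odd0. lra. Qed.

Lemma sinv_odd y : sinv (- y) = - sinv y.
Proof. rewrite <- (sigma_sinv y) at 1. rewrite <- sigma_odd. apply sinv_sigma. Qed.

Lemma sigma_pos x : 0 < x -> 0 < sigma x.
Proof. intros; rewrite <- sigma_0; auto. Qed.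

Lemma sinv_pos y : 0 < y -> 0 < sinv y.
Proof. intros y_pos; rewrite <- sigma_0 in y_pos. rewrite <- (sinv_sigma 0). apply sinv_increasing, y_pos. Qed.

Lemma sinv_abs_lt y e : Rabs y < sigma e -> Rabs (sinv y) < e.
Proof.
  intros bound. apply Rabs_def2 in bound as [upper lower].
  apply sinv_increasing in upper. apply sinv_increasing in lower.
  rewrite sinv_sigma in upper. rewrite <- sigma_odd, sinv_sigma in lower.
  apply Rabs_def1; assumption.
Qed.

Lemma sigma_continuity : continuity sigma.
Proof.
  apply increasing_surjective_continuity; [exact sigma_increasing|].
  intro y; exists (sinv y); apply sigma_sinv.
Qed.

Lemma sinv_continuity : continuity sinv.
Proof.
  apply increasing_surjective_continuity; [exact sinv_increasing|].
  intro x; exists (sigma x); apply sinv_sigma.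
Qed.

Lemma act_gen_box_continuous g : box_continuous (gact g).
Proof.
  intros [x y] e e_pos.
  destruct g; simpl; unfold hmap, vmap, hinv, vinv, close; simpl.
  - destruct (shear_close sinv sinv_continuity x y e e_pos) as [d [d_pos Hd]].
    exists d; split; [exact d_pos|]. intros [x' y'] [dx dy]; apply Hd; assumption.
  - destruct (shear_close sigma sigma_continuity y x e e_pos) as [d [d_pos Hd]].
    exists d; split; [exact d_pos|]. intros [x' y'] [dx dy]; simpl in *.
    rewrite (Rplus_comm (sigma x')), (Rplus_comm (sigma x)).
    destruct (Hd y' x' dy dx); split; assumption.
  - destruct (shear_close _ (continuity_opp _ sinv_continuity) x y e e_pos) as [d [d_pos Hd]].
    exists d; split; [exact d_pos|]. intros [x' y'] [dx dy]; apply Hd; assumption.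
  - destruct (shear_close _ (continuity_opp _ sigma_continuity) y x e e_pos) as [d [d_pos Hd]].
    exists d; split; [exact d_pos|]. intros [x' y'] [dx dy]; simpl in *.
    destruct (Hd y' x' dy dx); split; assumption.
Qed.

Lemma act_word_box_continuous w : box_continuous (word w).
Proof.
  induction w as [|g w IH].
  - intros Q e e_pos. exists e; split; auto.
  - exact (box_continuous_comp _ _ IH (act_gen_box_continuous g)).
Qed.

Lemma act_word_app w1 w2 P : word (w1 ++ w2) P = word w1 (word w2 P).
Proof. unfold act_word. apply fold_right_app. Qed.

Lemma act_gen_inv_gen g P : gact (inv_gen g) (gact g P) = P.
Proof. destruct P, g; simpl; unfold hmap, vmap, hinv, vinv; simpl; f_equal; ring. Qed.

Lemma act_word_inv_word w P : word (inv_word w) (word w P) = P.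
Proof.
  induction w as [|g w IH]; [reflexivity|].
  unfold inv_word; simpl. rewrite act_word_app; simpl.
  rewrite act_gen_inv_gen. exact IH.
Qed.

Lemma act_word_opp_pt w P : word w (opp_pt P) = opp_pt (word w P).
Proof.
  induction w as [|g w IH]; [reflexivity|]. simpl. rewrite IH.
  destruct (word w P) as [x y].
  destruct g; simpl; unfold hmap, vmap, hinv, vinv, opp_pt; simpl;
    rewrite ?sinv_odd, ?sigma_odd; f_equal; ring.
Qed.

Lemma act_word_mirror w P : word (map inv_gen w) (mirror P) = mirror (word w P).
Proof.
  induction w as [|g w IH]; [reflexivity|]. simpl. rewrite IH.
  destruct (word w P) as [x y].
  destruct g; simpl; unfold hmap, vmap, hinv, vinv, mirror; simpl;
    rewrite ?sigma_odd; f_equal; ring.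
Qed.


Definition in_orbit_closure (p T : pt) : Prop :=
  forall e, 0 < e -> exists w, close e (word w p) T.

Lemma orbit_closure_act w p T : in_orbit_closure p T -> in_orbit_closure p (word w T).
Proof.
  intros T_cl e e_pos.
  destruct (act_word_box_continuous w T e e_pos) as [d [d_pos Hd]].
  destruct (T_cl d d_pos) as [w' Hw']. exists (w ++ w').
  rewrite act_word_app. apply Hd, Hw'.
Qed.

Lemma orbit_closure_closed p T :
  (forall e, 0 < e -> exists P, in_orbit_closure p P /\ close e P T) -> in_orbit_closure p T.
Proof.
  intros near e e_pos.
  destruct (near (e / 2)) as [P [P_cl PT]]; [lra|].
  destruct (P_cl (e / 2)) as [w Hw]; [lra|].
  exists w. replace e with (e / 2 + e / 2) by field. exact (close_trans _ _ _ _ _ Hw PT).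
Qed.

Definition in_Ox_orbit (P : pt) : Prop := exists w x, P = word w (x, 0).

Definition on_graph (P : pt) : Prop := snd P = sigma (fst P).
Definition below_graph (P : pt) : Prop := snd P < sigma (fst P).
Definition above_graph (P : pt) : Prop := sigma (fst P) < snd P.

Lemma graph_preimage w P :
  on_graph (word w P) -> P = word (inv_word w ++ Gv :: nil) (fst (word w P), 0).
Proof.
  intros graph. rewrite act_word_app; simpl; unfold vmap; simpl.
  rewrite Rplus_0_r, <- graph, <- surjective_pairing.
  symmetry; apply act_word_inv_word.
Qed.

Lemma graph_preimage_in_Ox_orbit w P : on_graph (word w P) -> in_Ox_orbit P.
Proof. intros graph. do 2 eexists. exact (graph_preimage w P graph). Qed.

Lemma Ox_orbit_opp_pt P : in_Ox_orbit P -> in_Ox_orbit (opp_pt P).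
Proof.
  intros [w [x ->]]. exists w, (- x).
  rewrite <- act_word_opp_pt. unfold opp_pt; simpl. rewrite Ropp_0. reflexivity.
Qed.

Lemma Ox_orbit_mirror P : in_Ox_orbit P -> in_Ox_orbit (mirror P).
Proof. intros [w [x ->]]. exists (map inv_gen w), (- x). rewrite <- act_word_mirror. reflexivity. Qed.

Lemma Oy_in_Ox_orbit y : in_Ox_orbit (0, y).
Proof.
  exists (Ghi :: Gv :: nil), (sinv y). simpl; unfold vmap, hinv; simpl.
  rewrite Rplus_0_r, sigma_sinv. f_equal; ring.
Qed.

Definition in_quadrant (P : pt) : Prop := 0 < fst P /\ 0 < snd P.

Definition descent_gen (P : pt) : gen :=
  if Rlt_dec (snd P) (sigma (fst P)) then Ghi else Gvi.

Fixpoint descent_word (P : pt) (n : nat) : list gen :=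
  match n with
  | O => nil
  | S n => descent_gen (word (descent_word P n) P) :: descent_word P n
  end.

Definition descent (P : pt) (n : nat) : pt := word (descent_word P n) P.

Lemma descent_word_negative P n : Forall negative_gen (descent_word P n).
Proof.
  induction n as [|n IH]; constructor; [| exact IH].
  unfold descent_gen; destruct (Rlt_dec _ _); [left | right]; reflexivity.
Qed.

Lemma act_descent_gen_below P Q : below_graph P -> gact (descent_gen P) Q = hinv sinv Q.
Proof. unfold descent_gen, below_graph; intros. destruct (Rlt_dec _ _); [reflexivity | contradiction]. Qed.

Lemma act_descent_gen_not_below P Q : ~ below_graph P -> gact (descent_gen P) Q = vinv sigma Q.
Proof. unfold descent_gen, below_graph; intros. destruct (Rlt_dec _ _); [contradiction | reflexivity]. Qed.

Lemma not_below_graph P : ~ below_graph P -> ~ on_graph P -> above_graph P.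
Proof. unfold below_graph, on_graph, above_graph; intros. lra. Qed.

Lemma descent_step_quadrant P :
  in_quadrant P -> ~ on_graph P -> in_quadrant (gact (descent_gen P) P).
Proof.
  intros [x_pos y_pos] off. destruct (Rlt_dec (snd P) (sigma (fst P))) as [below | not_below].
  - rewrite (act_descent_gen_below _ _ below); unfold hinv, in_quadrant; simpl.
    apply sinv_increasing in below. rewrite sinv_sigma in below. split; lra.
  - rewrite (act_descent_gen_not_below _ _ not_below); unfold vinv, in_quadrant; simpl.
    pose proof (not_below_graph _ not_below off). unfold above_graph in *. split; lra.
Qed.

Section Descent.

Variable P : pt.
Hypothesis P_quadrant : in_quadrant P.
Hypothesis descent_off_graph : forall n, ~ on_graph (descent P n).

Lemma descent_quadrant n : in_quadrant (descent P n).
Proof.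
  induction n as [|n IH]; [exact P_quadrant|].
  exact (descent_step_quadrant _ IH (descent_off_graph n)).
Qed.

Lemma descent_frequently_below : frequently (fun k => below_graph (descent P k)).
Proof.
  apply (frequently_of_steady_decrease (fun k => snd (descent P k))
                                       (fun k => sigma (fst (descent P k)))).
  - intro k; apply descent_quadrant.
  - intro k; apply sigma_pos, descent_quadrant.
  - intros k not_below. unfold descent; simpl; fold (descent P k).
    rewrite (act_descent_gen_not_below _ _ not_below); unfold vinv; simpl. split; lra.
Qed.

Lemma descent_frequently_not_below : frequently (fun k => ~ below_graph (descent P k)).
Proof.
  apply (frequently_of_steady_decrease (fun k => fst (descent P k))
                                       (fun k => sinv (snd (descent P k)))).
  - intro k; apply descent_quadrant.
  - intro k; apply sinv_pos, descent_quadrant.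
  - intros k below. apply NNPP in below. unfold descent; simpl; fold (descent P k).
    rewrite (act_descent_gen_below _ _ below); unfold hinv; simpl. split; lra.
Qed.

Lemma descent_snd_small eta : 0 < eta -> exists n, snd (descent P n) < eta.
Proof.
  intros eta_pos. apply NNPP; intro large.
  assert (snd_large : forall n, eta <= snd (descent P n)).
  { intro n; apply Rnot_lt_le; intro small; apply large; exists n; exact small. }
  apply (not_frequently_large_decrease (fun k => fst (descent P k))
           (fun k => below_graph (descent P k)) (sinv eta)).
  - apply sinv_pos, eta_pos.
  - intro k; apply descent_quadrant.
  - intro k. unfold descent; simpl; fold (descent P k).
    destruct (Rlt_dec (snd (descent P k)) (sigma (fst (descent P k)))) as [below | not_below].
    + rewrite (act_descent_gen_below _ _ below); unfold hinv; simpl.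
      pose proof (sinv_pos _ (proj2 (descent_quadrant k))). lra.
    + rewrite (act_descent_gen_not_below _ _ not_below); unfold vinv; simpl. lra.
  - intros k below. unfold descent; simpl; fold (descent P k).
    rewrite (act_descent_gen_below _ _ below); unfold hinv; simpl.
    pose proof (sinv_le _ _ (snd_large k)). lra.
  - exact descent_frequently_below.
Qed.

End Descent.

Definition shifted (e : R) (P Q : pt) : Prop :=
  in_quadrant Q /\ fst P + e <= fst Q /\ snd Q <= snd P.

Lemma shifted_descent_step e P Q :
  0 <= e -> in_quadrant P -> ~ on_graph P -> (above_graph P -> above_graph Q) ->
  shifted e P Q -> shifted e (gact (descent_gen P) P) (gact (descent_gen P) Q).
Proof.
  intros e_ge0 [Px Py] off above_PQ [[Qx Qy] [x_shift y_shift]].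
  destruct (Rlt_dec (snd P) (sigma (fst P))) as [below | not_below].
  - rewrite !(act_descent_gen_below _ _ below); unfold hinv, shifted, in_quadrant; simpl.
    apply sinv_increasing in below. rewrite sinv_sigma in below.
    pose proof (sinv_le _ _ y_shift). repeat split; lra.
  - rewrite !(act_descent_gen_not_below _ _ not_below); unfold vinv, shifted, in_quadrant; simpl.
    specialize (above_PQ (not_below_graph _ not_below off)). unfold above_graph in above_PQ.
    assert (sigma (fst P) <= sigma (fst Q)) by (apply sigma_le; lra).
    repeat split; lra.
Qed.

Lemma segment_meets_graph w T e :
  above_graph (word w T) -> ~ above_graph (word w (fst T + e, snd T)) ->
  exists t, 0 <= t <= 1 /\ on_graph (word w (fst T + t * e, snd T)).
Proof.
  intros above_0 not_above_1.
  (* [v^-1] measures the height above the graph of sigma. *)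
  set (height t := snd (word (Gvi :: w) (fst T + t * e, snd T))).
  assert (height_cont : continuity height)
    by exact (segment_continuity _ T e (act_word_box_continuous (Gvi :: w))).
  assert (height_0 : 0 < height 0).
  { unfold height; simpl; unfold vinv; simpl.
    rewrite Rmult_0_l, Rplus_0_r, <- surjective_pairing. unfold above_graph in above_0. lra. }
  assert (height_1 : height 1 <= 0).
  { unfold height; simpl; unfold vinv; simpl. rewrite Rmult_1_l.
    unfold above_graph in not_above_1. lra. }
  destruct (IVT_cor height 0 1 height_cont ltac:(lra) ltac:(nra)) as [t [t01 zero]].
  exists t; split; [exact t01|].
  unfold height in zero; simpl in zero; unfold vinv in zero; simpl in zero.
  unfold on_graph; lra.
Qed.

Lemma quadrant_segment_meets_Ox_orbit T e :
  in_quadrant T -> 0 < e -> exists t, 0 <= t <= 1 /\ in_Ox_orbit (fst T + t * e, snd T).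
Proof.
  intros T_quadrant e_pos. apply NNPP; intro avoid.
  assert (off : forall t w, 0 <= t <= 1 -> ~ on_graph (word w (fst T + t * e, snd T))).
  { intros t w t01 graph. apply avoid. exists t.
    split; [exact t01 | exact (graph_preimage_in_Ox_orbit _ _ graph)]. }
  set (shadow n := word (descent_word T n) (fst T + e, snd T)).
  assert (T_off : forall n, ~ on_graph (descent T n)).
  { intros n graph. apply (off 0 (descent_word T n)); [lra|].
    rewrite Rmult_0_l, Rplus_0_r, <- surjective_pairing. exact graph. }
  assert (shadow_above : forall n, above_graph (descent T n) -> above_graph (shadow n)).
  { intros n above. apply NNPP; intro not_above.
    destruct (segment_meets_graph _ _ _ above not_above) as [t [t01 graph]].
    exact (off t _ t01 graph). }
  assert (shadow_shifted : forall n, shifted e (descent T n) (shadow n)).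
  { induction n as [|n IH].
    - destruct T_quadrant. unfold shifted, in_quadrant, shadow, descent; simpl. repeat split; lra.
    - exact (shifted_descent_step e _ _ ltac:(lra) (descent_quadrant _ T_quadrant T_off n)
               (T_off n) (shadow_above n) IH). }
  apply (not_frequently_large_decrease (fun k => snd (shadow k))
           (fun k => ~ below_graph (descent T k)) (sigma e)).
  - apply sigma_pos, e_pos.
  - intro k; apply shadow_shifted.
  - intro k. unfold shadow; simpl; fold (descent T k) (shadow k).
    destruct (Rlt_dec (snd (descent T k)) (sigma (fst (descent T k)))) as [below | not_below].
    + rewrite (act_descent_gen_below _ _ below); unfold hinv; simpl. lra.
    + rewrite (act_descent_gen_not_below _ _ not_below); unfold vinv; simpl.
      destruct (shadow_shifted k) as [[x_pos _] _]. pose proof (sigma_pos _ x_pos). lra.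
  - intros k not_below. unfold shadow; simpl; fold (descent T k) (shadow k).
    rewrite (act_descent_gen_not_below _ _ not_below); unfold vinv; simpl.
    destruct (shadow_shifted k) as [_ [x_shift _]].
    pose proof (proj1 (descent_quadrant _ T_quadrant T_off k)).
    assert (sigma e <= sigma (fst (shadow k))) by (apply sigma_le; lra). lra.
  - exact (descent_frequently_not_below _ T_quadrant T_off).
Qed.

Lemma Ox_orbit_dense_quadrant T e :
  in_quadrant T -> 0 < e -> exists P, in_Ox_orbit P /\ close e P T.
Proof.
  intros T_quadrant e_pos.
  destruct (quadrant_segment_meets_Ox_orbit T (e / 2) T_quadrant ltac:(lra)) as [t [t01 orbit]].
  eexists; split; [exact orbit|]. unfold close; simpl.
  replace (fst T + t * (e / 2) - fst T) with (t * (e / 2)) by ring.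
  rewrite Rminus_diag, Rabs_R0, Rabs_right by nra. split; nra.
Qed.

Lemma Ox_orbit_dense T e : 0 < e -> exists P, in_Ox_orbit P /\ close e P T.
Proof.
  intros e_pos.
  assert (upper : forall T, 0 < snd T -> exists P, in_Ox_orbit P /\ close e P T).
  { clear T; intros [x y] y_pos; simpl in y_pos.
    destruct (Rtotal_order x 0) as [x_neg | [-> | x_pos]].
    - destruct (Ox_orbit_dense_quadrant (mirror (x, y)) e) as [P [orbit near]];
        [unfold in_quadrant, mirror; simpl; split; lra | exact e_pos |].
      exists (mirror P); split; [exact (Ox_orbit_mirror _ orbit)|].
      rewrite <- (mirror_involutive (x, y)). exact (close_mirror _ _ _ near).
    - exists (0, y); split; [apply Oy_in_Ox_orbit | exact (close_refl _ _ e_pos)].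
    - apply Ox_orbit_dense_quadrant; [split; assumption | exact e_pos]. }
  destruct T as [x y]. destruct (Rtotal_order y 0) as [y_neg | [-> | y_pos]].
  - destruct (upper (opp_pt (x, y))) as [P [orbit near]]; [simpl; lra|].
    exists (opp_pt P); split; [exact (Ox_orbit_opp_pt _ orbit)|].
    rewrite <- (opp_pt_involutive (x, y)). exact (close_opp_pt _ _ _ near).
  - exists (x, 0); split; [exists nil, x; reflexivity | exact (close_refl _ _ e_pos)].
  - exact (upper (x, y) y_pos).
Qed.

Lemma graph_preimage_rational w Q :
  Forall negative_gen w -> on_graph (word w Q) ->
  on_rational_line sigma sinv Q /\ on_rational_line sigma sinv (mirror Q).
Proof.
  intros neg graph. set (a := fst (word w Q)).
  assert (Q_eq : Q = word (inv_word w ++ Gv :: nil) (a, 0)) by exact (graph_preimage w Q graph).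
  pose proof (inv_word_positive _ neg) as pos.
  split.
  - right; right; left. exists (word (inv_word w ++ Gv :: nil)). split.
    + exists (inv_word w ++ Gv :: nil); split; [|reflexivity].
      apply Forall_app; split; [exact pos | repeat constructor; right; reflexivity].
    + exists (a, 0); split; [reflexivity | symmetry; exact Q_eq].
  - right; right; right. exists (word (map inv_gen (inv_word w) ++ Ghi :: nil)). split.
    + exists (map inv_gen (inv_word w) ++ Ghi :: nil); split; [|reflexivity].
      apply Forall_app; split; [exact (map_inv_gen_negative _ pos) | repeat constructor; left; reflexivity].
    + exists (0, sigma a); split; [reflexivity|].
      rewrite Q_eq, !act_word_app, <- act_word_mirror. f_equal.
      simpl; unfold hinv, vmap, mirror; simpl. rewrite sinv_sigma. f_equal; ring.
Qed.

Lemma rational_line_opp_pt p :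
  on_rational_line sigma sinv p -> on_rational_line sigma sinv (opp_pt p).
Proof.
  unfold on_rational_line, Ox, Oy, opp_pt; simpl.
  intros [y0 | [x0 | [[m [[w [pos m_eq]] [q [q_Ox <-]]]] | [m [[w [neg m_eq]] [q [q_Oy <-]]]]]]].
  - left; rewrite y0; ring.
  - right; left; rewrite x0; ring.
  - right; right; left. exists m; split; [exists w; split; assumption|].
    exists (opp_pt q); split; [unfold opp_pt; simpl; rewrite q_Ox; ring|].
    rewrite !m_eq, act_word_opp_pt. reflexivity.
  - right; right; right. exists m; split; [exists w; split; assumption|].
    exists (opp_pt q); split; [unfold opp_pt; simpl; rewrite q_Oy; ring|].
    rewrite !m_eq, act_word_opp_pt. reflexivity.
Qed.

Lemma descent_snd_small_off_rational P :
  in_quadrant P ->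
  ~ on_rational_line sigma sinv P \/ ~ on_rational_line sigma sinv (mirror P) ->
  forall eta, 0 < eta -> exists n, 0 < snd (descent P n) < eta.
Proof.
  intros P_quadrant off_rational eta eta_pos.
  assert (off : forall n, ~ on_graph (descent P n)).
  { intros n graph.
    destruct (graph_preimage_rational _ _ (descent_word_negative P n) graph).
    destruct off_rational; contradiction. }
  destruct (descent_snd_small P P_quadrant off eta eta_pos) as [n small].
  exists n; split; [apply descent_quadrant; assumption | exact small].
Qed.

Lemma orbit_snd_small_upper p :
  0 < snd p -> ~ on_rational_line sigma sinv p ->
  forall eta, 0 < eta -> exists w, 0 < snd (word w p) < eta.
Proof.
  intros y_pos off eta eta_pos.
  destruct (Rtotal_order (fst p) 0) as [x_neg | [x0 | x_pos]].
  - rewrite <- (mirror_involutive p) in off.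
    destruct (descent_snd_small_off_rational (mirror p)) with (eta := eta) as [n small];
      [unfold in_quadrant, mirror; simpl; split; lra | right; exact off | exact eta_pos |].
    exists (map inv_gen (descent_word (mirror p) n)).
    pose proof (act_word_mirror (descent_word (mirror p) n) (mirror p)) as mirrored.
    rewrite mirror_involutive in mirrored. rewrite mirrored. exact small.
  - exfalso; apply off; right; left; exact x0.
  - destruct (descent_snd_small_off_rational p) with (eta := eta) as [n small];
      [split; assumption | left; exact off | exact eta_pos |].
    exists (descent_word p n); exact small.
Qed.

Lemma orbit_snd_small p :
  ~ on_rational_line sigma sinv p ->
  forall eta, 0 < eta -> exists w, 0 < Rabs (snd (word w p)) < eta.
Proof.
  intros off eta eta_pos.
  destruct (Rtotal_order (snd p) 0) as [y_neg | [y0 | y_pos]].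
  - assert (off' : ~ on_rational_line sigma sinv (opp_pt p)).
    { intro rational; apply off. rewrite <- (opp_pt_involutive p).
      exact (rational_line_opp_pt _ rational). }
    destruct (orbit_snd_small_upper (opp_pt p)) with (eta := eta) as [w small];
      [simpl; lra | exact off' | exact eta_pos |].
    exists w. rewrite act_word_opp_pt in small; simpl in small.
    rewrite Rabs_left by lra. exact small.
  - exfalso; apply off; left; exact y0.
  - destruct (orbit_snd_small_upper p y_pos off eta eta_pos) as [w small].
    exists w. rewrite Rabs_right by lra. exact small.
Qed.

Lemma act_word_repeat_h n Q :
  word (repeat Gh n) Q = (fst Q + INR n * sinv (snd Q), snd Q).
Proof.
  induction n as [|n IH]; [simpl; rewrite Rmult_0_l, Rplus_0_r; apply surjective_pairing|].
  rewrite S_INR; simpl. rewrite IH; unfold hmap; simpl. f_equal; ring.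
Qed.

Lemma act_word_repeat_hinv n Q :
  word (repeat Ghi n) Q = (fst Q - INR n * sinv (snd Q), snd Q).
Proof.
  induction n as [|n IH]; [simpl; rewrite Rmult_0_l, Rminus_0_r; apply surjective_pairing|].
  rewrite S_INR; simpl. rewrite IH; unfold hinv; simpl. f_equal; ring.
Qed.

Lemma horizontal_orbit_approx Q x :
  sinv (snd Q) <> 0 ->
  exists w, snd (word w Q) = snd Q /\ Rabs (fst (word w Q) - x) < Rabs (sinv (snd Q)).
Proof.
  intros d_neq0. set (d := sinv (snd Q)) in *. set (t := (x - fst Q) / d).
  assert (t_eq : x = fst Q + t * d) by (unfold t; field; exact d_neq0).
  assert (bound : forall s, Rabs s < 1 -> Rabs (s * d) < Rabs d).
  { intros s s_lt1. rewrite Rabs_mult. apply Rabs_pos_lt in d_neq0.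
    pose proof (Rabs_pos s). nra. }
  destruct (Rle_lt_dec 0 t) as [t_ge0 | t_neg].
  - destruct (nat_floor_exists t t_ge0) as [n floor].
    exists (repeat Gh n). rewrite act_word_repeat_h; simpl. split; [reflexivity|].
    fold d. rewrite t_eq. replace (fst Q + INR n * d - (fst Q + t * d)) with ((INR n - t) * d) by ring.
    apply bound, Rabs_def1; lra.
  - destruct (nat_floor_exists (- t) ltac:(lra)) as [n floor].
    exists (repeat Ghi n). rewrite act_word_repeat_hinv; simpl. split; [reflexivity|].
    fold d. rewrite t_eq. replace (fst Q - INR n * d - (fst Q + t * d)) with ((- INR n - t) * d) by ring.
    apply bound, Rabs_def1; lra.
Qed.

Lemma Ox_in_orbit_closure p :
  ~ on_rational_line sigma sinv p -> forall x, in_orbit_closure p (x, 0).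
Proof.
  intros off x e e_pos.
  pose proof (sigma_pos e e_pos) as se_pos.
  destruct (orbit_snd_small p off (Rmin e (sigma e))) as [w [b_pos b_small]];
    [apply Rmin_pos; assumption|].
  pose proof (Rmin_l e (sigma e)). pose proof (Rmin_r e (sigma e)).
  set (Q := word w p) in *.
  assert (d_small : Rabs (sinv (snd Q)) < e) by (apply sinv_abs_lt; lra).
  assert (d_neq0 : sinv (snd Q) <> 0).
  { intro d0. assert (b0 : snd Q = 0) by (rewrite <- (sigma_sinv (snd Q)), d0; exact sigma_0).
    rewrite b0, Rabs_R0 in b_pos. lra. }
  destruct (horizontal_orbit_approx Q x d_neq0) as [w' [same_snd near]].
  exists (w' ++ w). rewrite act_word_app. fold Q. split; simpl.
  - lra.
  - rewrite same_snd, Rminus_0_r. lra.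
Qed.

Lemma orbit_closure_full p :
  ~ on_rational_line sigma sinv p -> forall T, in_orbit_closure p T.
Proof.
  intros off T. apply orbit_closure_closed. intros e e_pos.
  destruct (Ox_orbit_dense T e e_pos) as [P [[w [x ->]] near]].
  exists (word w (x, 0)); split; [| exact near].
  apply orbit_closure_act, Ox_in_orbit_closure, off.
Qed.

End ShearGroup.

Theorem theorem1 (sigma sinv : R -> R) :
  incr_odd_homeo sigma ->
  (forall x, sinv (sigma x) = x) ->
  (forall y, sigma (sinv y) = y) ->
  forall p : pt, ~ on_rational_line sigma sinv p -> dense_orbit sigma sinv p.
Proof.
  (* Continuity and surjectivity of sigma follow from its monotonicity and [sinv]. *)
  intros [increasing [odd _]] sinv_sigma sigma_sinv p off q eps eps_pos.
  destruct (orbit_closure_full sigma sinv increasing odd sinv_sigma sigma_sinv p off q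
              (eps / 2) ltac:(lra)) as [w near].
  exists (act_word sigma sinv w); split.
  - exists w; reflexivity.
  - replace eps with (2 * (eps / 2)) by field. exact (dist2_lt_of_close _ _ _ near).
Qed.
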